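(* Let $\mathcal{F}\subset\mathbb{R}^d$ be a convex feasible set with bounded diameter $D_\infty$, i.e. $\|x-y\|_\infty\le D_\infty$ for all $x,y\in\mathcal{F}$. Let $f_1,\dots,f_T:\mathbb{R}^d\to\mathbb{R}$ be convex differentiable functions, and let $\theta^*\in\arg\min_{\theta\in\mathcal{F}}\sum_{t=1}^T f_t(\theta)$. Consider the AdaBelief iteration (without bias correction): starting from $\theta_1\in\mathcal{F}$, $m_0=0$, $s_0=0$, for $t=1,\dots,T$, $$g_t=\nabla f_t(\theta_t),\quad m_t=\beta_{1t}m_{t-1}+(1-\beta_{1t})g_t,\quad s_t=\beta_2 s_{t-1}+(1-\beta_2)(g_t-m_t)^2,$$ $$\theta_{t+1}=\Pi_{\mathcal{F},\sqrt{s_t}}\big(\theta_t-\alpha_t s_t^{-1/2}m_t\big),$$ where all operations on vectors are elementwise, $\Pi_{\mathcal{F},M}(y)=\arg\min_{x\in\mathcal{F}}\|M^{1/2}(x-y)\|$ (with $\sqrt{s_t}$ interpreted as the diagonal matrix with entries $\sqrt{s_{t,i}}$), and any small constant $\epsilon$ is regarded as absorbed into $s_t$. Assume $0\le\beta_2<1$, $\alpha_t=\alpha/\sqrt{t}$ with $\alpha>0$, $\beta_{11}=\beta_1$, $0\le\beta_{1t}\le\beta_1<1$, and $s_t\le s_{t+1}$ (elementwise) for all $t\in[T]$. Assume $\|g_t\|_\infty\le G_\infty/2$ (hence $\|g_t-m_t\|_\infty\le G_\infty$) and $s_{t,i}\ge c>0$ for all $t\in[T]$ and $i\in[d]$. Then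 $$\sum_{t=1}^T[f_t(\theta_t)-f_t(\theta^* )]\le \frac{D_\infty^2\sqrt{T}}{2\alpha(1-\beta_1)}\sum_{i=1}^d s_{T,i}^{1/2}+\frac{(1+\beta_1)\alpha\sqrt{1+\log T}}{2\sqrt{c}(1-\beta_1)^3}\sum_{i=1}^d\big\|g_{1:T,i}^2\big\|_2+\frac{D_\infty^2}{2(1-\beta_1)}\sum_{t=1}^T\sum_{i=1}^d\frac{\beta_{1t}s_{t,i}^{1/2}}{\alpha_t}.$$
   Context: $g_{t,i}$ and $s_{t,i}$ denote the $i$-th coordinates of $g_t$ and $s_t$; $g_{1:T,i}^2$ denotes the vector $(g_{1,i}^2,\dots,g_{T,i}^2)\in\mathbb{R}^T$, and $\|\cdot\|_2$ is the Euclidean norm. *)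

From HB Require Import structures.
From mathcomp Require Import all_boot all_order all_algebra.
From mathcomp Require Import all_classical all_reals all_analysis.
Set Implicit Arguments. Unset Strict Implicit. Unset Printing Implicit Defensive.
Import Order.TTheory GRing.Theory Num.Theory.
Import numFieldNormedType.Exports.
Local Open Scope ring_scope.
Local Open Scope classical_set_scope.

Section Defs.
Variables (R : realType) (d : nat).

Definition convex_fun (f : 'rV[R]_d -> R) : Prop :=
  forall x y (l : R), 0 <= l -> l <= 1 ->
    f (l *: x + (1 - l) *: y) <= l * f x + (1 - l) * f y.

(* gradient of f at x: the vector of the differential applied to the
   standard basis vectors (meaningful when f is differentiable at x) *)
Definition grad (f : 'rV[R]_d -> R) (x : 'rV[R]_d) : 'rV[R]_d :=
  \row_i ('d f x (delta_mx 0 i : 'rV[R]_d)).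

(* squared weighted distance ||M^{1/2}(x-y)||^2 with M = diag(w) *)
Definition wdist2 (w x y : 'rV[R]_d) : R :=
  \sum_(i < d) w 0 i * (x 0 i - y 0 i) ^+ 2.

Definition is_wproj (F : set 'rV[R]_d) (w y p : 'rV[R]_d) : Prop :=
  F p /\ forall x, F x -> wdist2 w p y <= wdist2 w x y.

End Defs.

(* Convexity bounds the regret by the linearised regret
   sum_t <g_t, theta_t - theta*>.  As theta* lies in F, the weighted projection
   defining theta_(t+1) is no farther from theta* than the unprojected point;
   expanding the square splits each linearised term, up to a nonnegative perfect
   square, into a telescoping difference of sqrt(s_t)-weighted squared distances,
   a gradient term and a beta_1t bias term.  Summation by parts bounds the
   telescoping sum, because sqrt(s_(t,i)) sqrt(t) / alpha is nondecreasing and all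
   squared distances are at most D^2.  The gradient term is controlled through
   m_t^2 <= g_t^2 + beta_1 m_(t-1)^2, which gives
   sum_t m_(t-1)^2 / sqrt t <= (1 - beta_1)^-1 sum_t g_t^2 / sqrt t, and then by
   Cauchy-Schwarz together with sum_(t <= T) 1/t <= 1 + ln T. *)

From HB Require Import structures.
From mathcomp Require Import all_boot all_order all_algebra.
From mathcomp Require Import all_classical all_reals all_analysis.
From mathcomp Require Import ring lra.
Set Implicit Arguments. Unset Strict Implicit. Unset Printing Implicit Defensive.
Import Order.TTheory GRing.Theory Num.Theory.
Import numFieldNormedType.Exports.
Local Open Scope ring_scope.
Local Open Scope classical_set_scope.

Section ConvexGradient.
Variables (R : realType) (d : nat) (f : 'rV[R]_d -> R).

Lemma diff_gradE x v : 'd f x v = \sum_(i < d) v 0 i * grad f x 0 i.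
Proof.
rewrite {1}(matrix_sum_delta v) big_ord1 linear_sum.
by apply: eq_bigr => i _; rewrite linearZ /= /grad mxE.
Qed.

Lemma convex_diff_le x y :
  convex_fun f -> differentiable f x -> 'd f x (y - x) <= f y - f x.
Proof.
move=> cf df; have dv : derivable f x (y - x) by exact: diff_derivable.
have sub : 0^'+ `=>` (0 : R)^' by apply: within_subset => h /= /lt0r_neq0.
rewrite -deriveE // /derive cvg_at_rightE //.
apply: limr_le; first exact/cvgP/(cvg_trans (cvg_app _ sub) dv).
near=> h.
have h0 : 0 < h by near: h; exact: nbhs_right_gt.
have h1 : h <= 1 by near: h; apply: nbhs_right_le; exact: ltr01.
have := cf y x h (ltW h0) h1.
have -> : h *: y + (1 - h) *: x = h *: (y - x) + x.
  by rewrite scalerBr scalerBl scale1r addrA addrAC.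
by rewrite /= ler_pdivrMl //; lra.
Unshelve. all: by end_near.
Qed.

Lemma convex_gap_le_grad x y : convex_fun f -> differentiable f x ->
  f x - f y <= \sum_(i < d) grad f x 0 i * (x 0 i - y 0 i).
Proof.
move=> cf df; have := convex_diff_le y cf df.
have -> : 'd f x (y - x) = - \sum_(i < d) grad f x 0 i * (x 0 i - y 0 i).
  by rewrite diff_gradE -sumrN; apply: eq_bigr => i _; rewrite !mxE; ring.
lra.
Qed.

End ConvexGradient.

Section WeightedProjection.
Variables (R : realType) (d : nat) (F : set 'rV[R]_d) (w y p z : 'rV[R]_d).
Hypotheses (convF : convex_set F) (w_ge0 : forall i, 0 <= w 0 i).
Hypotheses (projp : is_wproj F w y p) (Fz : F z).

Lemma wproj_variational :
  0 <= \sum_(i < d) w 0 i * (p 0 i - y 0 i) * (z 0 i - p 0 i).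
Proof.
case: projp => Fp pmin.
set B := \sum_(i < d) _; set C := \sum_(i < d) w 0 i * (z 0 i - p 0 i) ^+ 2.
have C_ge0 : 0 <= C by apply: sumr_ge0 => i _; rewrite mulr_ge0 ?sqr_ge0.
have segment_ge0 l : 0 < l -> l <= 1 -> 0 <= 2 * B + l * C.
  move=> l_gt0 l_le1; rewrite -(pmulr_rge0 _ l_gt0).
  have /pmin : F (l *: z + (1 - l) *: p).
    by have := @convF z p (Itv01 (ltW l_gt0) l_le1); rewrite !inE; apply.
  have -> : wdist2 w (l *: z + (1 - l) *: p) y = wdist2 w p y + l * (2 * B) + l ^+ 2 * C.
    rewrite /wdist2 /B /C !mulr_sumr -!big_split /=.
    by apply: eq_bigr => i _; rewrite !mxE; ring.
  lra.
(* if B < 0, moving from p towards z by l = -B / (C - B) would get closer to y *)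
rewrite leNgt; apply/negP => B_lt0.
have CB_gt0 : 0 < C - B by lra.
have l_gt0 : 0 < - B / (C - B) by rewrite divr_gt0 // oppr_gt0.
have l_le1 : - B / (C - B) <= 1 by rewrite ler_pdivrMr //; lra.
have : - B / (C - B) * C <= - B by rewrite mulrAC ler_pdivrMr // mulrC; nra.
have := segment_ge0 _ l_gt0 l_le1; lra.
Qed.

Lemma wproj_wdist2_le : wdist2 w p z <= wdist2 w z y.
Proof.
have py_ge0 : 0 <= wdist2 w p y by apply: sumr_ge0 => i _; rewrite mulr_ge0 ?sqr_ge0.
have -> : wdist2 w z y = wdist2 w p z + wdist2 w p y
    + 2 * \sum_(i < d) w 0 i * (p 0 i - y 0 i) * (z 0 i - p 0 i).
  rewrite /wdist2 mulr_sumr -!big_split /=.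
  by apply: eq_bigr => i _; ring.
have := wproj_variational; lra.
Qed.

End WeightedProjection.

Lemma wproj_iterates_sqr_le (R : realType) d (F : set 'rV[R]_d) (w y x : nat -> 'rV[R]_d)
    (z : 'rV[R]_d) (D : R) T :
  (forall u v, F u -> F v -> forall i, `|u 0 i - v 0 i| <= D) -> F z -> F (x 1%N) ->
  (forall t, (1 <= t <= T)%N -> is_wproj F (w t) (y t) (x t.+1)) ->
  forall t i, (1 <= t <= T)%N -> (x t 0 i - z 0 i) ^+ 2 <= D ^+ 2.
Proof.
move=> diamF Fz Fx1 projx t i Ht.
have Fxt : F (x t).
  case: t Ht => [//|[|t]] Ht; first exact: Fx1.
  by case: (projx t.+1); rewrite //= ltnW.
by have := diamF _ _ Fxt Fz i; rewrite ler_norml => /andP[]; nra.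
Qed.

Lemma adabelief_step_coord_le (R : realFieldType) (g m' x w a r : R) :
  0 < w -> 0 < a -> 0 <= r -> r < 1 ->
  g * x <= (w * x ^+ 2 - w * (x - a * (r * m' + (1 - r) * g) / w) ^+ 2) / (2 * a)
           + a * ((1 - r) * g ^+ 2 + r * m' ^+ 2) / (2 * w)
           + r * w * x ^+ 2 / (2 * a * (1 - r)).
Proof.
move=> w_gt0 a_gt0 r_ge0 r_lt1; rewrite -subr_ge0.
have -> : (w * x ^+ 2 - w * (x - a * (r * m' + (1 - r) * g) / w) ^+ 2) / (2 * a)
           + a * ((1 - r) * g ^+ 2 + r * m' ^+ 2) / (2 * w)
           + r * w * x ^+ 2 / (2 * a * (1 - r)) - g * x
   = r * (w * x - a * (1 - r) * (g - m')) ^+ 2 / (2 * a * (1 - r) * w).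
  by field; rewrite !gt_eqF //; lra.
by apply: divr_ge0; [rewrite mulr_ge0 ?sqr_ge0 | rewrite ?mulr_ge0 //; lra].
Qed.

Lemma adabelief_step_le (R : realType) d (F : set 'rV[R]_d) (w : 'I_d -> R)
    (g m' m th th' z : 'rV[R]_d) (a r : R) :
  convex_set F -> F z -> (forall i, 0 < w i) -> 0 < a -> 0 <= r -> r < 1 ->
  m = r *: m' + (1 - r) *: g ->
  is_wproj F (\row_i w i) (\row_i (th 0 i - a * m 0 i / w i)) th' ->
  \sum_(i < d) g 0 i * (th 0 i - z 0 i)
  <= (\sum_(i < d) w i * (th 0 i - z 0 i) ^+ 2
      - \sum_(i < d) w i * (th' 0 i - z 0 i) ^+ 2) / (2 * a)
   + \sum_(i < d) a * ((1 - r) * g 0 i ^+ 2 + r * m' 0 i ^+ 2) / (2 * w i)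
   + \sum_(i < d) r * w i * (th 0 i - z 0 i) ^+ 2 / (2 * a * (1 - r)).
Proof.
move=> convF Fz w_gt0 a_gt0 r_ge0 r_lt1 -> projth'.
have w_ge0 i : 0 <= (\row_i w i) 0 i by rewrite mxE ltW.
have proj_le := wproj_wdist2_le convF w_ge0 projth' Fz.
apply: le_trans (ler_sum _ (fun i _ => adabelief_step_coord_le (g 0 i) (m' 0 i) (th 0 i - z 0 i)
  (w_gt0 i) a_gt0 r_ge0 r_lt1)) _.
rewrite !big_split /= -mulr_suml sumrB lerD2r lerD2r.
rewrite ler_wpM2r ?invr_ge0 ?mulr_ge0 ?(ltW a_gt0) // lerB //.
have -> : \sum_(i < d) w i * (th' 0 i - z 0 i) ^+ 2 = wdist2 (\row_i w i) th' z.
  by apply: eq_bigr => i _; rewrite mxE.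
apply: le_trans proj_le _; rewrite le_eqVlt; apply/orP; left.
by apply/eqP/eq_bigr => i _; rewrite !mxE; ring.
Qed.

Lemma sum_by_parts_le (R : realDomainType) (v y : nat -> R) (D : R) T :
  (0 < T)%N -> 0 <= v 1%N -> (forall t, (1 <= t < T)%N -> v t <= v t.+1) ->
  (forall t, (1 <= t <= T)%N -> y t <= D) -> 0 <= y T.+1 ->
  \sum_(1 <= t < T.+1) v t * (y t - y t.+1) <= v T * D.
Proof.
move=> T_gt0 v1_ge0 v_incr y_le yT1_ge0.
have partial n : (n < T)%N ->
    \sum_(1 <= t < n.+2) v t * (y t - y t.+1) <= v n.+1 * (D - y n.+2) /\ 0 <= v n.+1.
  elim: n => [_|n IH n_lt].
    by rewrite big_nat1; split=> //; have := y_le 1%N T_gt0; nra.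
  have [IH1 IH2] := IH (ltnW n_lt).
  have := v_incr n.+1 n_lt; have := y_le n.+2 n_lt.
  by rewrite big_nat_recr //=; split; nra.
have := partial T.-1; rewrite ltn_predL prednK // => /(_ T_gt0) [].
nra.
Qed.

Lemma sum_shift_le (R : realDomainType) (eta a : nat -> R) T :
  a 0%N = 0 -> (forall t, 0 <= a t) -> (forall t, 0 <= eta t) ->
  (forall t, (0 < t)%N -> eta t.+1 <= eta t) ->
  \sum_(1 <= t < T.+1) eta t * a t.-1 <= \sum_(1 <= t < T.+1) eta t * a t.
Proof.
move=> a0 a_ge0 eta_ge0 eta_decr.
case: T => [|T]; first by rewrite !big_geq.
rewrite big_nat_recl //= a0 mulr0 add0r [X in _ <= X]big_nat_recr //= ler_wpDr ?mulr_ge0 //.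
by apply: ler_sum_nat => t /andP[t_gt0 _]; rewrite ler_wpM2r ?eta_decr.
Qed.

Lemma damped_sum_le (R : realFieldType) (eta a G : nat -> R) (b : R) T :
  0 <= b -> b < 1 -> a 0%N = 0 -> (forall t, 0 <= a t) -> (forall t, 0 <= eta t) ->
  (forall t, (0 < t)%N -> eta t.+1 <= eta t) ->
  (forall t, (1 <= t <= T)%N -> a t <= G t + b * a t.-1) ->
  \sum_(1 <= t < T.+1) eta t * a t.-1 <= (1 - b)^-1 * \sum_(1 <= t < T.+1) eta t * G t.
Proof.
move=> b_ge0 b_lt1 a0 a_ge0 eta_ge0 eta_decr a_rec.
have shift := sum_shift_le T a0 a_ge0 eta_ge0 eta_decr.
have rec : \sum_(1 <= t < T.+1) eta t * a t
    <= \sum_(1 <= t < T.+1) eta t * G t + b * \sum_(1 <= t < T.+1) eta t * a t.-1.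
  rewrite mulr_sumr -big_split /=; apply: ler_sum_nat => t Ht.
  by rewrite mulrCA -mulrDr ler_wpM2l ?a_rec.
rewrite ler_pdivlMl; last by lra.
nra.
Qed.

Lemma ln_ratio_ge (R : realType) (x y : R) : 0 < x -> 0 < y -> 1 - x / y <= ln y - ln x.
Proof.
move=> x_gt0 y_gt0.
have := @le_ln1Dx R (x / y - 1); rewrite subrKC ln_div ?posrE //.
by move=> /(_ _); rewrite ltrBrDl subrr divr_gt0 // => /(_ isT); lra.
Qed.

Lemma harmonic_sum_le_ln (R : realType) n :
  \sum_(1 <= t < n.+1) (t%:R : R)^-1 <= 1 + ln n%:R.
Proof.
elim: n => [|[|n] IH]; first by rewrite big_geq // ln0 // addr0.
  by rewrite big_nat1 ln1 invr1 addr0.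
rewrite big_nat_recr //= (_ : 1 + ln n.+2%:R = 1 + ln n.+1%:R + (ln n.+2%:R - ln n.+1%:R));
  last by ring.
apply: lerD => //; apply: le_trans (ln_ratio_ge _ _) => //.
rewrite [X in _ <= X](_ : _ = (n.+2%:R : R)^-1) //.
by rewrite -[n.+2]addn1 natrD; field; apply: lt0r_neq0; have := ler0n R n; lra.
Qed.

Lemma cauchy_schwarz_sum (R : rcfType) (I : Type) (r : seq I) (u v : I -> R) :
  \sum_(i <- r) u i * v i
    <= Num.sqrt (\sum_(i <- r) u i ^+ 2) * Num.sqrt (\sum_(i <- r) v i ^+ 2).
Proof.
set A := \sum_(i <- r) u i ^+ 2; set B := \sum_(i <- r) v i ^+ 2.
set C := \sum_(i <- r) u i * v i.
pose P i j := u i ^+ 2 * v j ^+ 2 - u i * v i * (u j * v j).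
have lagrange : \sum_(i <- r) \sum_(j <- r) (u i * v j - u j * v i) ^+ 2 = 2 * (A * B - C ^+ 2).
  transitivity (\sum_(i <- r) \sum_(j <- r) (P i j + P j i)).
    by apply: eq_bigr => i _; apply: eq_bigr => j _; rewrite /P; ring.
  under eq_bigr do rewrite big_split; rewrite big_split /= [X in _ + X]exchange_big /=.
  rewrite -mulr2n [in RHS]mulr_natl; congr (_ *+ 2).
  under eq_bigr do rewrite /P sumrB -!mulr_sumr.
  by rewrite sumrB -!mulr_suml expr2.
have : C ^+ 2 <= A * B.
  rewrite -subr_ge0 -(pmulr_rge0 _ (ltr0n R 2)) -lagrange.
  by apply: sumr_ge0 => i _; apply: sumr_ge0 => j _; exact: sqr_ge0.
move=> /ler_wsqrtr; rewrite sqrtr_sqr sqrtrM ?sumr_ge0 // => [|i _]; last exact: sqr_ge0.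
exact: le_trans (ler_norm _).
Qed.

Lemma inv_sqrt_nat_decr (R : rcfType) t :
  (0 < t)%N -> (Num.sqrt t.+1%:R)^-1 <= (Num.sqrt t%:R)^-1 :> R.
Proof. by move=> t_gt0; rewrite lef_pV2 ?posrE ?sqrtr_gt0 ?ltr0n // ler_wsqrtr // ler_nat. Qed.

Lemma sum_inv_sqrt_mul_le (R : realType) (G : nat -> R) T :
  \sum_(1 <= t < T.+1) (Num.sqrt t%:R)^-1 * G t
    <= Num.sqrt (\sum_(1 <= t < T.+1) G t ^+ 2) * Num.sqrt (1 + ln T%:R).
Proof.
apply: le_trans (cauchy_schwarz_sum _ _ _) _.
rewrite mulrC ler_wpM2l ?sqrtr_ge0 //; apply: ler_wsqrtr.
rewrite (eq_bigr (fun t => (t%:R : R)^-1)) ?harmonic_sum_le_ln // => t _.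
by rewrite exprVn sqr_sqrtr ?ler0n.
Qed.

Lemma distance_term_le (R : realType) d (w : nat -> 'I_d -> R) (a : nat -> R)
    (x : nat -> 'rV[R]_d) (z : 'rV[R]_d) (D : R) T :
  (0 < T)%N ->
  (forall t, (1 <= t <= T)%N -> 0 < a t) ->
  (forall t, (0 < t)%N -> a t.+1 <= a t) ->
  (forall t i, (1 <= t <= T)%N -> 0 <= w t i) ->
  (forall t i, (1 <= t < T)%N -> w t i <= w t.+1 i) ->
  (forall t i, (1 <= t <= T)%N -> (x t 0 i - z 0 i) ^+ 2 <= D) ->
  \sum_(1 <= t < T.+1) (\sum_(i < d) w t i * (x t 0 i - z 0 i) ^+ 2
                        - \sum_(i < d) w t i * (x t.+1 0 i - z 0 i) ^+ 2) / (2 * a t)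
  <= D / (2 * a T) * \sum_(i < d) w T i.
Proof.
move=> T_gt0 a_gt0 a_decr w_ge0 w_incr x_near.
under eq_bigr do rewrite -sumrB mulr_suml.
rewrite exchange_big mulr_sumr /=; apply: ler_sum => i _.
under eq_bigr do rewrite -mulrBr mulrAC.
rewrite (_ : D / (2 * a T) * w T i = w T i / (2 * a T) * D); last by ring.
apply: sum_by_parts_le => //.
- by rewrite divr_ge0 ?w_ge0 ?mulr_ge0 ?ltW ?a_gt0.
- move=> t /andP[t_gt0 t_lt].
  have Ht : (1 <= t <= T)%N by rewrite t_gt0 ltnW.
  have Ht1 : (1 <= t < T)%N by rewrite t_gt0.
  have at_gt0 := a_gt0 t Ht; have aS_gt0 := a_gt0 t.+1 t_lt.
  apply: ler_pM; rewrite ?invr_ge0 ?mulr_ge0 ?w_ge0 ?w_incr ?(ltW at_gt0) //.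
  by rewrite lef_pV2 ?posrE ?mulr_gt0 // ler_pM2l // a_decr.
- by move=> t Ht; exact: x_near.
- exact: sqr_ge0.
Qed.

Lemma bias_term_le (R : realType) d (w : nat -> 'I_d -> R) (a r : nat -> R)
    (x : nat -> 'rV[R]_d) (z : 'rV[R]_d) (D b : R) T :
  b < 1 ->
  (forall t, (1 <= t <= T)%N -> 0 < a t) ->
  (forall t, (1 <= t <= T)%N -> 0 <= r t /\ r t <= b) ->
  (forall t i, (1 <= t <= T)%N -> 0 <= w t i) ->
  (forall t i, (1 <= t <= T)%N -> (x t 0 i - z 0 i) ^+ 2 <= D) ->
  \sum_(1 <= t < T.+1) \sum_(i < d)
      r t * w t i * (x t 0 i - z 0 i) ^+ 2 / (2 * a t * (1 - r t))
  <= D / (2 * (1 - b)) * \sum_(1 <= t < T.+1) \sum_(i < d) r t * w t i / a t.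
Proof.
move=> b_lt1 a_gt0 r_bound w_ge0 x_near.
rewrite mulr_sumr; apply: ler_sum_nat => t Ht; rewrite mulr_sumr; apply: ler_sum => i _.
have [r_ge0 r_le] := r_bound t Ht; have at_gt0 := a_gt0 t Ht.
rewrite (_ : _ / _ = r t * w t i / a t * ((x t 0 i - z 0 i) ^+ 2 / (2 * (1 - r t))));
  last by field; rewrite !gt_eqF //; lra.
rewrite [X in _ <= X]mulrC; apply: ler_wpM2l; first by rewrite !divr_ge0 ?mulr_ge0 ?w_ge0 // ltW.
apply: ler_pM; rewrite ?sqr_ge0 ?invr_ge0 ?x_near //; first lra.
by rewrite lef_pV2 ?posrE; lra.
Qed.

Lemma sqr_momentum_le (R : realFieldType) (g m' r b : R) :
  0 <= r -> r <= b -> b <= 1 -> (r * m' + (1 - r) * g) ^+ 2 <= g ^+ 2 + b * m' ^+ 2.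
Proof.
move=> r_ge0 r_le_b b_le1.
have h1 : 0 <= r * (1 - r) * (g - m') ^+ 2.
  by rewrite mulr_ge0 ?sqr_ge0 // mulr_ge0 // subr_ge0 (le_trans r_le_b).
have h2 : 0 <= r * g ^+ 2 by rewrite mulr_ge0 ?sqr_ge0.
have h3 : 0 <= (b - r) * m' ^+ 2 by rewrite mulr_ge0 ?sqr_ge0 // subr_ge0.
lra.
Qed.

Lemma momentum_term_le (R : realFieldType) (a r b c w G M : R) :
  0 <= a -> 0 < c -> c <= w -> 0 <= r -> r <= b -> 0 <= G -> 0 <= M ->
  a * ((1 - r) * G + r * M) / (2 * w) <= (a * G + b * (a * M)) / (2 * c).
Proof.
move=> a_ge0 c_gt0 c_le_w r_ge0 r_le_b G_ge0 M_ge0.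
have w_gt0 := lt_le_trans c_gt0 c_le_w.
have rG_ge0 := mulr_ge0 r_ge0 G_ge0; have rM_le : r * M <= b * M by rewrite ler_wpM2r.
rewrite (_ : a * G + b * (a * M) = a * (G + b * M)); last by ring.
apply: (@le_trans _ _ (a * (G + b * M) / (2 * w))).
  by apply: ler_wpM2r; [rewrite invr_ge0 mulr_ge0 // ltW | apply: ler_wpM2l => //; lra].
apply: ler_wpM2l; first by rewrite mulr_ge0 // addr_ge0 // mulr_ge0 // (le_trans r_ge0).
by rewrite lef_pV2 ?posrE ?mulr_gt0 // ler_pM2l.
Qed.

Lemma gradient_coord_term_le (R : realType) (g m r w : nat -> R) (alpha b c : R) T :
  0 < alpha -> 0 < c -> 0 <= b -> b < 1 -> m 0%N = 0 ->
  (forall t, (1 <= t <= T)%N -> m t = r t * m t.-1 + (1 - r t) * g t) ->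
  (forall t, (1 <= t <= T)%N -> 0 <= r t /\ r t <= b) ->
  (forall t, (1 <= t <= T)%N -> c <= w t) ->
  \sum_(1 <= t < T.+1)
      alpha / Num.sqrt t%:R * ((1 - r t) * g t ^+ 2 + r t * m t.-1 ^+ 2) / (2 * w t)
  <= (1 + b) * alpha * Num.sqrt (1 + ln T%:R) / (2 * c * (1 - b) ^+ 3)
     * Num.sqrt (\sum_(1 <= t < T.+1) (g t ^+ 2) ^+ 2).
Proof.
move=> alpha_gt0 c_gt0 b_ge0 b_lt1 m0 m_rec r_bound c_le_w.
set Psi := \sum_(1 <= t < T.+1) alpha / Num.sqrt t%:R * g t ^+ 2.
set M := \sum_(1 <= t < T.+1) alpha / Num.sqrt t%:R * m t.-1 ^+ 2.
have M_le : M <= (1 - b)^-1 * Psi.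
  apply: (damped_sum_le (a := fun t => m t ^+ 2) (G := fun t => g t ^+ 2)) => //.
  - by rewrite m0 expr0n.
  - by move=> t; exact: sqr_ge0.
  - by move=> t; rewrite divr_ge0 ?sqrtr_ge0 // ltW.
  - by move=> t t_gt0; rewrite ler_wpM2l ?inv_sqrt_nat_decr // ltW.
  - by move=> t Ht; case: (r_bound t Ht) => r_ge0 r_le_b; rewrite m_rec // sqr_momentum_le // ltW.
have Psi_le : Psi <= alpha * (Num.sqrt (\sum_(1 <= t < T.+1) (g t ^+ 2) ^+ 2)
                             * Num.sqrt (1 + ln T%:R)).
  rewrite /Psi; under eq_bigr do rewrite -mulrA.
  by rewrite -mulr_sumr ler_wpM2l ?sum_inv_sqrt_mul_le // ltW.
set XL := _ * Num.sqrt _ in Psi_le.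
have Psi_ge0 : 0 <= Psi.
  by rewrite sumr_ge0 // => t _; rewrite mulr_ge0 ?divr_ge0 ?sqr_ge0 ?sqrtr_ge0 // ltW.
have b1_gt0 : 0 < 1 - b by lra.
have sum_le : Psi + b * M <= (1 - b)^-1 * (alpha * XL).
  apply: le_trans (ler_wpM2l _ Psi_le); last by rewrite invr_ge0 ltW.
  rewrite [X in _ <= X](_ : _ = Psi + b * ((1 - b)^-1 * Psi)); last by field; rewrite gt_eqF.
  by rewrite lerD2l ler_wpM2l.
have inv_le : (1 - b)^-1 <= (1 + b) / (1 - b) ^+ 3.
  rewrite ler_pdivlMr ?exprn_gt0 // (_ : _ * _ = (1 - b) ^+ 2); last by field; rewrite gt_eqF.
  nra.
apply: (@le_trans _ _ ((Psi + b * M) / (2 * c))).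
  rewrite /Psi /M mulr_sumr -big_split /= mulr_suml; apply: ler_sum_nat => t Ht.
  case: (r_bound t Ht) => r_ge0 r_le_b.
  by rewrite momentum_term_le ?divr_ge0 ?sqrtr_ge0 ?sqr_ge0 ?c_le_w // ltW.
rewrite [X in _ <= X](_ : _ = (1 + b) / (1 - b) ^+ 3 * (alpha * XL) / (2 * c)); last first.
  by rewrite /XL; field; rewrite !gt_eqF ?exprn_gt0.
apply: ler_wpM2r; first by rewrite invr_ge0 mulr_ge0 // ltW.
apply: le_trans sum_le _; apply: ler_wpM2r => //.
exact: le_trans Psi_ge0 Psi_le.
Qed.

Lemma gradient_term_le (R : realType) d (g m : nat -> 'rV[R]_d) (r : nat -> R)
    (w : nat -> 'I_d -> R) (alpha b c : R) T :
  0 < alpha -> 0 < c -> 0 <= b -> b < 1 -> m 0%N = 0 ->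
  (forall t, (1 <= t <= T)%N -> m t = r t *: m t.-1 + (1 - r t) *: g t) ->
  (forall t, (1 <= t <= T)%N -> 0 <= r t /\ r t <= b) ->
  (forall t i, (1 <= t <= T)%N -> c <= w t i) ->
  \sum_(1 <= t < T.+1) \sum_(i < d) alpha / Num.sqrt t%:R
      * ((1 - r t) * g t 0 i ^+ 2 + r t * m t.-1 0 i ^+ 2) / (2 * w t i)
  <= (1 + b) * alpha * Num.sqrt (1 + ln T%:R) / (2 * c * (1 - b) ^+ 3)
     * \sum_(i < d) Num.sqrt (\sum_(1 <= t < T.+1) (g t 0 i ^+ 2) ^+ 2).
Proof.
move=> alpha_gt0 c_gt0 b_ge0 b_lt1 m0 m_rec r_bound c_le_w.
rewrite exchange_big mulr_sumr; apply: ler_sum => i _.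
apply: (gradient_coord_term_le (g := fun t => g t 0 i) (m := fun t => m t 0 i)
  (w := fun t => w t i)) => // [|t Ht|t Ht]; last exact: c_le_w.
  by rewrite m0 mxE.
by rewrite m_rec // !mxE.
Qed.

Theorem theorem2p1 (R : realType) (d T : nat)
  (F : set 'rV[R]_d) (Dinf Ginf c alpha beta1 beta2 eps : R)
  (f : nat -> 'rV[R]_d -> R) (theta_star : 'rV[R]_d)
  (theta g m s : nat -> 'rV[R]_d) (beta1t : nat -> R) :
  convex_set F ->
  (forall x y, F x -> F y -> forall i, `|x 0 i - y 0 i| <= Dinf) ->
  (forall t, (1 <= t <= T)%N -> convex_fun (f t)) ->
  (forall t, (1 <= t <= T)%N -> forall x, differentiable (f t) x) ->
  F theta_star ->
  (forall x, F x -> \sum_(1 <= t < T.+1) f t theta_star <= \sum_(1 <= t < T.+1) f t x) ->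
  (* AdaBelief iteration; eps >= 0 is the small constant absorbed into s_t *)
  0 <= eps ->
  F (theta 1%N) ->
  m 0%N = 0 -> s 0%N = 0 ->
  (forall t, (1 <= t <= T)%N -> g t = grad (f t) (theta t)) ->
  (forall t, (1 <= t <= T)%N ->
     m t = beta1t t *: m t.-1 + (1 - beta1t t) *: g t) ->
  (forall t, (1 <= t <= T)%N -> forall i,
     s t 0 i = beta2 * s t.-1 0 i + (1 - beta2) * (g t 0 i - m t 0 i) ^+ 2 + eps) ->
  (forall t, (1 <= t <= T)%N ->
     is_wproj F (\row_i Num.sqrt (s t 0 i)) 
       (\row_i (theta t 0 i - alpha / Num.sqrt t%:R * m t 0 i / Num.sqrt (s t 0 i)))
       (theta t.+1)) ->
  0 <= beta2 -> beta2 < 1 ->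
  0 < alpha ->
  beta1t 1%N = beta1 ->
  (forall t, (1 <= t <= T)%N -> 0 <= beta1t t /\ beta1t t <= beta1) ->
  beta1 < 1 ->
  (forall t, (1 <= t <= T)%N -> forall i, s t 0 i <= s t.+1 0 i) ->
  (forall t, (1 <= t <= T)%N -> forall i, `|g t 0 i| <= Ginf / 2) ->
  0 < c ->
  (forall t, (1 <= t <= T)%N -> forall i, c <= s t 0 i) ->
  \sum_(1 <= t < T.+1) (f t (theta t) - f t theta_star)
  <= Dinf ^+ 2 * Num.sqrt T%:R / (2 * alpha * (1 - beta1))
       * \sum_(i < d) Num.sqrt (s T 0 i)
   + (1 + beta1) * alpha * Num.sqrt (1 + ln T%:R)
       / (2 * Num.sqrt c * (1 - beta1) ^+ 3)
       * \sum_(i < d) Num.sqrt (\sum_(1 <= t < T.+1) (g t 0 i ^+ 2) ^+ 2)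
   + Dinf ^+ 2 / (2 * (1 - beta1))
       * \sum_(1 <= t < T.+1) \sum_(i < d)
           beta1t t * Num.sqrt (s t 0 i) / (alpha / Num.sqrt t%:R).
Proof.
move=> convF diamF convf difff Fstar _ _ Ftheta1 m0 _ hg hm _ hproj _ _ alpha_gt0 beta11
  beta1t_bound beta1_lt1 s_incr _ c_gt0 c_le_s.
have [-> | T_gt0] := posnP T.
  rewrite !big_geq // sqrtr0 !(mul0r, add0r, mulr0, addr0) big1 ?mulr0 // => i _.
  by rewrite big_geq // sqrtr0.
have beta1_ge0 : 0 <= beta1 by rewrite -beta11; case: (beta1t_bound 1%N T_gt0).
have step_gt0 t : (1 <= t <= T)%N -> 0 < alpha / Num.sqrt t%:R.
  by case/andP=> t_gt0 _; rewrite divr_gt0 // sqrtr_gt0 ltr0n.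
have sqrt_c_le t i : (1 <= t <= T)%N -> Num.sqrt c <= Num.sqrt (s t 0 i).
  by move=> Ht; rewrite ler_wsqrtr ?c_le_s.
have sqrt_s_gt0 t i : (1 <= t <= T)%N -> 0 < Num.sqrt (s t 0 i).
  by move=> Ht; rewrite (lt_le_trans _ (sqrt_c_le t i Ht)) // sqrtr_gt0.
have dist2_le := wproj_iterates_sqr_le diamF Fstar Ftheta1 hproj.
apply: (@le_trans _ _
    (\sum_(1 <= t < T.+1) \sum_(i < d) g t 0 i * (theta t 0 i - theta_star 0 i))).
  apply: ler_sum_nat => t Ht; rewrite hg //.
  exact: convex_gap_le_grad (convf t Ht) (difff t Ht _).
apply: le_trans (@ler_sum_nat _ 1 T.+1 _ _ (fun t Ht => adabelief_step_le convF Fstar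
  (sqrt_s_gt0 t ^~ Ht) (step_gt0 t Ht) (beta1t_bound t Ht).1
  (le_lt_trans (beta1t_bound t Ht).2 beta1_lt1) (hm t Ht) (hproj t Ht))) _.
rewrite !big_split /=; apply: lerD; first apply: lerD.
- have sqrt_s_incr t i : (1 <= t < T)%N -> Num.sqrt (s t 0 i) <= Num.sqrt (s t.+1 0 i).
    by case/andP=> t_gt0 t_lt; rewrite ler_wsqrtr // s_incr // t_gt0 ltnW.
  apply: le_trans (distance_term_le (w := fun t i => Num.sqrt (s t 0 i)) T_gt0 step_gt0
    (fun t t_gt0 => ler_wpM2l (ltW alpha_gt0) (inv_sqrt_nat_decr R t_gt0))
    (fun t i Ht => ltW (sqrt_s_gt0 t i Ht)) sqrt_s_incr dist2_le) _.
  apply: ler_wpM2r; first by rewrite sumr_ge0 // => i _; exact: sqrtr_ge0.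
  rewrite (_ : _ / _ = Dinf ^+ 2 * Num.sqrt T%:R / (2 * alpha * (1 - beta1)) * (1 - beta1));
    last by field; rewrite !gt_eqF ?sqrtr_gt0 ?ltr0n //; lra.
  rewrite ler_piMr ?divr_ge0 ?(mulr_ge0 (sqr_ge0 _) (sqrtr_ge0 _)) ?mulr_ge0 //; lra.
- by apply: gradient_term_le; rewrite // sqrtr_gt0.
- exact: (bias_term_le (w := fun t i => Num.sqrt (s t 0 i)) beta1_lt1 step_gt0 beta1t_bound
    (fun t i Ht => ltW (sqrt_s_gt0 t i Ht)) dist2_le).
Qed.
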